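(* Let $A_1=(1,0,-1)^8$ and $A_2=(0,1,-1,-1,3,-2,-2,5,-3,-3,7,-4,-4,9,-5,-5,11,-6,-6,13,-7,-7,15,-8)$ in $\mathbb{Z}^{24}$, let $a_1,a_2$ be integers, $A=a_1A_1+a_2A_2$, and let $m$ be an odd positive integer with $\gcd(a_1,a_2,m)=1$ and $\gcd(a_2,m)\in\{1,3\}$. Then the triangle $\nabla\big(\mathrm{IAP}(\pi_m(A),\pi_m(A)X_{24})[3\lambda m]\big)$ is balanced in $\mathbb{Z}/m\mathbb{Z}$ for every non-negative integer $\lambda$.
   Context: $\pi_m$ is reduction mod $m$; tuples are row vectors; $X_{24}=(\delta_{r,s}+\delta_{r,25-s})_{1\le r,s\le24}$. For $24$-tuples $A=(a_0,\dots,a_{23})$, $D=(d_0,\dots,d_{23})$, $\mathrm{IAP}(A,D)=(u_j)_{j\in\mathbb{Z}}$ with $u_{24q+r}=a_r+qd_r$. For a sequence $S=(u_j)_{j\in\mathbb{Z}}$, $S[n]=(u_0,\dots,u_{n-1})$. For a finite sequence $(u_0,\dots,u_{n-1})$, the triangle $\nabla(u_0,\dots,u_{n-1})$ is $(a_{i,j})_{i,j\ge0,i+j<n}$ with $a_{0,j}=u_j$ and $a_{i,j}=-a_{i-1,j}-a_{i-1,j+1}$ for $i\ge1$; it is balanced if every element of $\mathbb{Z}/m\mathbb{Z}$ occurs the same number of times among its entries. *)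

From mathcomp Require Import all_boot all_order all_algebra.
Set Implicit Arguments. Unset Strict Implicit. Unset Printing Implicit Defensive.
Import GRing.Theory Num.Theory.
Local Open Scope ring_scope.

(* Elements of Z/mZ are represented by integers, compared modulo m; an
   element of Z/mZ is a residue class k (0 <= k < m). *)

Definition A1 : seq int := flatten (nseq 8 [:: 1; 0; -1]).
Definition A2 : seq int :=
  [:: 0; 1; -1; -1; 3; -2; -2; 5; -3; -3; 7; -4; -4; 9; -5; -5; 11; -6;
      -6; 13; -7; -7; 15; -8].

Definition Avec (a1 a2 : int) (r : nat) : int :=
  a1 * nth 0 A1 r + a2 * nth 0 A2 r.

(* Row vector times X_24: (A X_24)_s = sum_r A_r (delta_{r,s} + delta_{r,25-s})
   (1-indexed), i.e. 0-indexed d_s = a_s + a_{23-s}. *)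
Definition X24 (r s : nat) : int :=
  ((r == s) : int) + ((r == 23 - s)%N : int).
Definition rowX24 (a : nat -> int) (s : nat) : int :=
  \sum_(r < 24) a r * X24 r s.

(* IAP(A,D) restricted to non-negative indices: u_{24q+r} = a_r + q d_r. *)
Definition IAP (a d : nat -> int) (j : nat) : int :=
  a (j %% 24)%N + (j %/ 24)%N%:Z * d (j %% 24)%N.

Fixpoint tri (u : nat -> int) (i j : nat) : int :=
  match i with
  | 0 => u j
  | i'.+1 => - tri u i' j - tri u i' j.+1
  end.

Definition tri_count (m : nat) (u : nat -> int) (n k : nat) : nat :=
  \sum_(i < n) \sum_(j < n - i) (((tri u i j - k%:Z) %% m%:Z)%Z == 0).

Definition balanced (m : nat) (u : nat -> int) (n : nat) : Prop :=
  forall k1 k2 : nat, (k1 < m)%N -> (k2 < m)%N ->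
    tri_count m u n k1 = tri_count m u n k2.

From mathcomp Require Import all_boot all_order all_algebra.
From mathcomp Require Import zify ring.
Set Implicit Arguments.
Unset Strict Implicit.
Import GRing.Theory Num.Theory.

(* In the sheared coordinates J = j + 2 i, entry (i, j) of the triangle is
   a1 cA1(J mod 3) + a2 (cA2(J mod 3) + sA2(J mod 3) (J div 3) + i cA2(J+1 mod 3)),
   so within a class r = J mod 3, moving by three rows or three columns adds a
   multiple of a2.  Let C_r(K) count the class-r entries congruent to K mod m.
   Shifting every row by three columns gives
     C_r(K - a2 sA2(r)) + head_r(K) = C_r(K) + tail_r(K),
   where head_r and tail_r count the first three and the three positions past
   the end of each row.  Those are sums along lines which, as 3 m divides the
   side n, are invariant under K -> K + a2 e with e = +-1 or +-2, hence (m odd)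
   under K -> K + a2.  Summing the identity over K, K + a2 sA2(r), ... modulo m
   gives head_r = tail_r, so C_r is invariant under adding a2 and therefore
   under adding gcd(a2, m).  If gcd(a2, m) = 1 each C_r is constant.  If it is
   3, class-r entries are congruent to a1 cA1(r) mod 3, so C_r(K) is 0 or a
   constant Z_r depending on K mod 3; the three classes have the same size,
   so Z_0 = Z_1 = Z_2, and as 3 does not divide a1 each K falls in exactly one
   of the residues a1 cA1(r). *)

Lemma sum_nat_split (G : nat -> nat) (a b : nat) :
  \sum_(i < a + b) G i = \sum_(i < a) G i + \sum_(i < b) G (a + i).
Proof. by rewrite big_split_ord. Qed.

Lemma sum_nat_shift (G : nat -> nat) (L k : nat) :
  \sum_(i < L) G (i + k) + \sum_(i < k) G i =
  \sum_(i < L) G i + \sum_(i < k) G (L + i).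
Proof.
rewrite addnC -sum_nat_split [(L + k)%N]addnC sum_nat_split; congr (_ + _).
by apply: eq_bigr => i _; rewrite addnC.
Qed.

Lemma sum_nat_periodic (G : nat -> nat) (p q : nat) :
  (forall i, G (i + p) = G i) -> \sum_(i < p * q) G i = q * \sum_(i < p) G i.
Proof.
move=> Gp; have Gpk k i : G (p * k + i) = G i.
  by elim: k => [|k IHk]; rewrite ?muln0 // mulnS -addnA addnC Gp.
elim: q => [|q IHq]; first by rewrite muln0 big_ord0.
rewrite mulnSr sum_nat_split IHq mulSnr; congr (_ + _).
by apply: eq_bigr => i _; rewrite Gpk.
Qed.

Definition class_size (n r : nat) : nat :=
  \sum_(i < n) \sum_(j < n - i) ((j + 2 * i) %% 3 == r).

Lemma class_size_succ n s : 3 %| n -> s < 2 ->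
  class_size n s = class_size n s.+1.
Proof.
move=> /dvdnP [q n_eq] lt_s2.
have sum_third (G : nat -> nat) : (forall i, G (i + 3) = G i) ->
    G 0 + G 1 + G 2 = 1 -> \sum_(i < n) G i = q.
  move=> G3 G012; rewrite n_eq mulnC sum_nat_periodic //.
  by rewrite !big_ord_recr big_ord0 /= G012 muln1.
have row (i : 'I_n) :
    \sum_(j < n - i) ((j + 2 * i) %% 3 == s) + ((2 * i) %% 3 == s.+1) =
    \sum_(j < n - i) ((j + 2 * i) %% 3 == s.+1) + ((n + i) %% 3 == s.+1).
  have := sum_nat_shift (fun j => (j + 2 * i) %% 3 == s.+1) (n - i) 1.
  rewrite !big_ord1 /= (_ : n - i + 0 + 2 * i = n + i); last first.
    by have := ltn_ord i; lia.
  by move=> <-; congr (_ + _); apply: eq_bigr => j _; lia.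
have := @eq_bigr _ 0 addn _ (index_enum 'I_n) (fun _ => true) _ _ (fun i _ => row i).
rewrite !big_split /= (sum_third (fun i => (2 * i) %% 3 == s.+1))
  ?(sum_third (fun i => (n + i) %% 3 == s.+1)); try by move=> *; lia.
by move/eqP; rewrite eqn_add2r => /eqP.
Qed.

Local Open Scope ring_scope.

Lemma sum_dvdz_residues (m : nat) (X : int) : (0 < m)%N ->
  (\sum_(K < m) (m%:Z %| (X - K%:Z)%R)%Z)%N = 1%N.
Proof.
move=> m_gt0.
have m_neq0 : m%:Z != 0 by rewrite -lt0n in m_gt0 *; lia.
have Xm_ge0 := modz_ge0 X m_neq0.
have Xm_nat : (X %% m)%Z = (absz (X %% m)%Z)%:Z by rewrite abszE ger0_norm.
have Xm_lt : (absz (X %% m)%Z < m)%N.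
  by rewrite -ltz_nat -Xm_nat ltz_pmod // ltz_nat.
have dvd_eq (K : 'I_m) : (m%:Z %| X - K%:Z)%Z = (K == Ordinal Xm_lt).
  rewrite -eqz_mod_dvd (modz_small (m := K%:Z)) -?val_eqE /=; last first.
    by rewrite ltz_nat ltn_ord.
  by rewrite Xm_nat eq_sym.
rewrite (bigD1 (Ordinal Xm_lt)) // dvd_eq eqxx big1 ?addn0 // => K.
by rewrite dvd_eq => /negbTE ->.
Qed.

Lemma coprimez_odd (m : nat) (e : int) :
  odd m -> e \in [:: 1; -1; 2; -2] -> coprimez e m.
Proof.
move=> odd_m; rewrite !inE => /or4P[] /eqP ->.
all: by rewrite ?coprimeNz coprimezE /= ?coprime1n ?coprime2n.
Qed.

Section Periods.

Variable P : int -> nat.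

Definition periodic (d : int) := forall K, P (K + d) = P K.

Lemma periodicN d : periodic d -> periodic (- d).
Proof. by move=> Pd K; rewrite -[in RHS](subrK d K) Pd. Qed.

Lemma periodicD d e : periodic d -> periodic e -> periodic (d + e).
Proof. by move=> Pd Pe K; rewrite addrA Pe Pd. Qed.

Lemma periodicMz d z : periodic d -> periodic (d * z).
Proof.
move=> Pd; have Pdn (k : nat) : periodic (d * k%:Z).
  elim: k => [|k IHk] K; first by rewrite mulr0 addr0.
  by rewrite -addn1 PoszD mulrDr mulr1 addrA Pd IHk.
by case: z => k; rewrite ?NegzE ?mulrN; [exact: Pdn | exact: periodicN (Pdn _)].
Qed.

Lemma periodic_dvdz d K K' : periodic d -> (d %| K - K')%Z -> P K = P K'.
Proof.
move=> Pd /dvdzP [z dK]; have -> : K = K' + d * z by rewrite mulrC -dK; ring.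
exact: periodicMz.
Qed.

Lemma periodic_gcdz d e : periodic d -> periodic e -> periodic (gcdz d e).
Proof.
move=> Pd Pe; have [u [v <-]] := Bezoutz d e.
by rewrite [u * d]mulrC [v * e]mulrC; apply: periodicD; apply: periodicMz.
Qed.

Lemma periodic_coprime (m : nat) d e :
  periodic m%:Z -> periodic (d * e) -> coprimez e m -> periodic d.
Proof.
move=> Pm Pde /coprimezP [[u v] /= uv1].
have -> : d = d * e * u + m%:Z * (d * v) by rewrite -[LHS]mulr1 -uv1; ring.
by apply: periodicD; apply: periodicMz.
Qed.

End Periods.

(* Summing the hypothesis along [K + d * s], s < m, the P-terms cancel since
   [K - d] and [K + d * (m - 1)] agree modulo m. *)
Lemma periodic_telescope (m : nat) (P Q1 Q2 : int -> nat) d : (0 < m)%N ->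
  periodic P m%:Z -> periodic Q1 d -> periodic Q2 d ->
  (forall K, P (K - d)%R + Q1 K = P K + Q2 K)%N -> Q1 =1 Q2.
Proof.
move=> m_gt0 Pm Q1d Q2d PQ K.
pose G (s : nat) := P (K + d * s%:Z - d).
have G_succ s : G (s + 1)%N = P (K + d * s%:Z).
  by rewrite /G PoszD; congr P; ring.
have G_shift : (\sum_(s < m) G (s + 1)%N = \sum_(s < m) G s)%N.
  have := sum_nat_shift G m 1; rewrite !big_ord1 /= addn0.
  have -> : G m = G 0%N.
    apply: periodic_dvdz Pm _.
    by rewrite /G (_ : _ - _ = m%:Z * d) ?dvdz_mulr //; ring.
  by move/eqP; rewrite eqn_add2r => /eqP.
have : (\sum_(s < m) (G s + Q1 (K + d * s%:Z)%R) =
        \sum_(s < m) (P (K + d * s%:Z)%R + Q2 (K + d * s%:Z)%R))%N.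
  by apply: eq_bigr => s _; exact: PQ.
rewrite !big_split /=.
rewrite (eq_bigr _ (fun (s : 'I_m) _ => periodicMz s%:Z Q1d K)).
rewrite (eq_bigr _ (fun (s : 'I_m) _ => periodicMz s%:Z Q2d K)).
rewrite -(eq_bigr _ (fun (s : 'I_m) _ => G_succ s)) G_shift.
by rewrite !sum_nat_const card_ord => /eqP; rewrite eqn_add2l eqn_pmul2l // => /eqP.
Qed.

Lemma rowX24E (a : nat -> int) (s : nat) : (s < 24)%N ->
  rowX24 a s = a s + a (23 - s)%N.
Proof.
move=> lt_s24; have pick (t : nat) : (t < 24)%N ->
    \sum_(r < 24) a r * (((r : nat) == t) : int) = a t.
  move=> lt_t24; rewrite (bigD1 (Ordinal lt_t24)) //= eqxx mulr1 big1 ?addr0 //.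
  by move=> r; rewrite -val_eqE /= => /negbTE ->; rewrite mulr0.
rewrite /rowX24 /X24; under eq_bigr do rewrite mulrDr.
by rewrite big_split /= !pick //; lia.
Qed.

(* Position 3 t + r (r < 3) of A1 is [cA1 r], and of A2 is [cA2 r + t sA2 r]. *)
Definition cA1 (r : nat) : int := nth 0 [:: 1; 0; -1] r.
Definition cA2 (r : nat) : int := nth 0 [:: 0; 1; -1] r.
Definition sA2 (r : nat) : int := nth 0 [:: -1; 2; -1] r.

Definition slope (r k l : nat) : int :=
  sA2 r * l%:Z + 3 * cA2 (r.+1 %% 3) * k%:Z.

Lemma slope_scale r k l z : slope r (k * z) (l * z) = slope r k l * z%:Z.
Proof. by rewrite /slope !PoszM; ring. Qed.

Section Triangle.

Variables a1 a2 : int.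

Definition useq (J : nat) : int :=
  a1 * cA1 (J %% 3) + a2 * (cA2 (J %% 3) + sA2 (J %% 3) * (J %/ 3)%:Z).

Lemma Avec_block (r : nat) : (r < 24)%N ->
  Avec a1 a2 r = useq r /\
  Avec a1 a2 r + Avec a1 a2 (23 - r) = 8 * a2 * sA2 (r %% 3).
Proof.
rewrite /Avec /useq.
by do 24?[case: r => [|r];
  first by move=> _; rewrite /modn /divn /cA1 /cA2 /sA2 /=; split; ring].
Qed.

Lemma IAP_Avec : IAP (Avec a1 a2) (rowX24 (Avec a1 a2)) =1 useq.
Proof.
move=> J; have lt_r24 : (J %% 24 < 24)%N by rewrite ltn_mod.
rewrite /IAP rowX24E //; have [-> ->] := Avec_block lt_r24; rewrite /useq.
have -> : (J %% 3 = (J %% 24) %% 3)%N by rewrite modn_dvdm.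
have -> : (J %/ 3 = (J %/ 24) * 8 + (J %% 24) %/ 3)%N by lia.
rewrite PoszD PoszM; ring.
Qed.

Definition entry (i J : nat) : int := useq J + i%:Z * a2 * cA2 (J.+1 %% 3).

Lemma entry_rec i J : - entry i J - entry i J.+1 = entry i.+1 J.+2.
Proof.
rewrite /entry /useq (divn_eq J 3).
move: (J %/ 3)%N (J %% 3)%N (ltn_mod J 3) => t [|[|[|//]]] _;
  rewrite -!addnS !modnMDl !divnMDl // /cA1 /cA2 /sA2 /modn /divn /= ?addn0 ?addn1;
  rewrite -[i.+1]addn1 -?[t.+1]addn1 !PoszD; ring.
Qed.

Lemma tri_IAP_Avec i j :
  tri (IAP (Avec a1 a2) (rowX24 (Avec a1 a2))) i j = entry i (j + 2 * i).
Proof.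
elim: i j => [|i IHi] j /=; first by rewrite IAP_Avec /entry addn0; ring.
by rewrite !IHi entry_rec mulnS addnCA.
Qed.

Lemma entry_shift i J k l :
  entry (i + 3 * k) (J + 3 * l) = entry i J + a2 * slope (J %% 3) k l.
Proof.
rewrite /entry /useq /slope.
have -> : ((J + 3 * l) %% 3 = J %% 3)%N by lia.
have -> : ((J + 3 * l).+1 %% 3 = (J %% 3).+1 %% 3)%N by lia.
have -> : ((J + 3 * l) %/ 3 = J %/ 3 + l)%N by lia.
have -> : (J.+1 %% 3 = (J %% 3).+1 %% 3)%N by lia.
by rewrite !PoszD ?PoszM; ring.
Qed.

Variables m n : nat.

Definition hit (r : nat) (K : int) (i J : nat) : nat :=
  (J %% 3 == r)%N && (m%:Z %| entry i J - K)%Z.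

Definition class_count (r : nat) (K : int) : nat :=
  \sum_(i < n) \sum_(j < n - i) hit r K i (j + 2 * i).

(* The first three sheared columns of each row, and the three just past its
   end (outside the triangle). *)
Definition head_count (r : nat) (K : int) : nat :=
  \sum_(i < n) \sum_(c < 3) hit r K i (2 * i + c).

Definition tail_count (r : nat) (K : int) : nat :=
  \sum_(i < n) \sum_(c < 3) hit r K i (n + i + c).

Lemma hit_periodic r i J : periodic (fun K => hit r K i J) m%:Z.
Proof. by move=> K; rewrite /hit opprD addrA rpredBr ?dvdzz. Qed.

Lemma hit_shift r K i J k l :
  hit r K (i + 3 * k) (J + 3 * l) = hit r (K - a2 * slope r k l) i J.
Proof.
rewrite /hit entry_shift (_ : (J + 3 * l) %% 3 = J %% 3)%N; last by lia.
by case: eqP => // <-; rewrite opprB addrA [_ + a2 * _]addrC addrA.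
Qed.

Lemma class_count_periodic_m r : periodic (class_count r) m%:Z.
Proof.
by move=> K; apply: eq_bigr => i _; apply: eq_bigr => j _; apply: hit_periodic.
Qed.

Lemma head_count_periodic_m r : periodic (head_count r) m%:Z.
Proof.
by move=> K; apply: eq_bigr => i _; apply: eq_bigr => c _; apply: hit_periodic.
Qed.

Lemma tail_count_periodic_m r : periodic (tail_count r) m%:Z.
Proof.
by move=> K; apply: eq_bigr => i _; apply: eq_bigr => c _; apply: hit_periodic.
Qed.

Lemma class_count_shift r K :
  (class_count r (K - a2 * sA2 r) + head_count r K =
   class_count r K + tail_count r K)%N.
Proof.
rewrite -!big_split; apply: eq_bigr => i _ /=.
have lt_in := ltn_ord i.
have := sum_nat_shift (fun j => hit r K i (j + 2 * i)) (n - i) 3.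
congr (_ + _ = _ + _)%N; apply: eq_bigr => j _.
- have := hit_shift r K i (j + 2 * i) 0 1; rewrite muln0 addn0 muln1.
  rewrite (_ : slope r 0 1 = sA2 r) => [<-|]; last by rewrite /slope; ring.
  by rewrite addnAC.
- by rewrite addnC.
- by congr hit; lia.
Qed.

Lemma tri_count_classes k :
  tri_count m (IAP (Avec a1 a2) (rowX24 (Avec a1 a2))) n k =
  (\sum_(r < 3) class_count r k%:Z)%N.
Proof.
rewrite /class_count exchange_big; apply: eq_bigr => i _ /=.
rewrite exchange_big; apply: eq_bigr => j _ /=.
rewrite tri_IAP_Avec /hit !big_ord_recr big_ord0 /=.
have -> : ((entry i (j + 2 * i) - k%:Z) %% m%:Z == 0)%Z =
          (m%:Z %| entry i (j + 2 * i) - k%:Z)%Z by exact/eqP/dvdz_mod0P.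
have := ltn_mod (j + 2 * i) 3.
by case: ((j + 2 * i) %% 3)%N => [|[|[|]]] // _; case: (_ %| _)%Z.
Qed.

Lemma sum_class_count r : (0 < m)%N ->
  (\sum_(K < m) class_count r K%:Z)%N = class_size n r.
Proof.
move=> m_gt0; rewrite /class_count /class_size exchange_big; apply: eq_bigr => i _.
rewrite exchange_big; apply: eq_bigr => j _ /=.
rewrite /hit; case: eqP => _ /=; last by rewrite big1.
exact: sum_dvdz_residues.
Qed.

Lemma entry_mod3 i J : (3 %| a2)%Z -> (3 %| entry i J - a1 * cA1 (J %% 3))%Z.
Proof.
move=> dvd3_a2; rewrite /entry /useq.
rewrite (_ : _ - _ = a2 * (cA2 (J %% 3) + sA2 (J %% 3) * (J %/ 3)%:Z
                           + i%:Z * cA2 (J.+1 %% 3))); last by ring.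
exact: dvdz_mulr.
Qed.

Lemma class_count_off r K : (3 %| m)%N -> (3 %| a2)%Z ->
  ~~ (3 %| a1 * cA1 r - K)%Z -> class_count r K = 0%N.
Proof.
move=> dvd3_m dvd3_a2 off_K.
rewrite /class_count big1 // => i _; rewrite big1 // => j _.
rewrite /hit; case: eqP => //= J_r; apply/eqP; rewrite eqb0.
apply: contra off_K => m_entry; set x := entry i (j + 2 * i).
rewrite -J_r (_ : _ - _ = (x - K) - (x - a1 * cA1 ((j + 2 * i) %% 3))); last by ring.
by rewrite rpredB ?entry_mod3 // (dvdz_trans _ m_entry) // dvdzE.
Qed.

Section MultipleOf3m.

Hypothesis n_mult : (3 * m %| n)%N.

(* Stepping by (3, 3 l) in (row, sheared column) adds [a2 * slope r 1 l]; as
   [3 m] divides [n], the line is [n]-periodic modulo [m]. *)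
Lemma line_count_periodic r (J0 : nat -> nat) l :
  (forall i, J0 (i + 3) = J0 i + 3 * l)%N ->
  periodic (fun K => \sum_(i < n) hit r K i (J0 i))%N (a2 * slope r 1 l).
Proof.
move=> J0_step K /=.
pose G i := hit r (K + a2 * slope r 1 l) i (J0 i).
have G_step i : G (i + 3)%N = hit r K i (J0 i).
  by rewrite /G J0_step -{1}[3%N]muln1 hit_shift addrK.
have J0_iter c k : J0 (c + 3 * k)%N = (J0 c + 3 * (l * k))%N.
  elim: k => [|k IHk]; first by rewrite !muln0 !addn0.
  by rewrite (_ : c + 3 * k.+1 = c + 3 * k + 3)%N ?J0_step ?IHk ?mulnS; lia.
have G_period c : G (n + c)%N = G c.
  have [q ->] := dvdnP n_mult.
  rewrite /G (_ : q * (3 * m) + c = c + 3 * (q * m))%N; last by lia.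
  rewrite J0_iter hit_shift mulnA slope_scale.
  apply: (periodic_dvdz (hit_periodic r c (J0 c))).
  by rewrite (_ : _ - _ = - (a2 * slope r q (l * q)) * m%:Z) ?dvdz_mull //; ring.
have := sum_nat_shift G n 3.
rewrite (eq_bigr _ (fun (c : 'I_3) _ => G_period c)).
move=> /eqP; rewrite eqn_add2r => /eqP.
by rewrite -(eq_bigr _ (fun (i : 'I_n) _ => G_step i)) => ->.
Qed.

Lemma head_count_periodic r : periodic (head_count r) (a2 * slope r 1 2).
Proof.
move=> K; rewrite /head_count exchange_big [RHS]exchange_big.
apply: eq_bigr => c _; apply: (@line_count_periodic r (fun i => 2 * i + c)%N 2).
by move=> i; lia.
Qed.

Lemma tail_count_periodic r : periodic (tail_count r) (a2 * slope r 1 1).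
Proof.
move=> K; rewrite /tail_count exchange_big [RHS]exchange_big.
apply: eq_bigr => c _; apply: (@line_count_periodic r (fun i => n + i + c)%N 1).
by move=> i; lia.
Qed.

Hypothesis odd_m : odd m.

Lemma class_count_periodic r : (r < 3)%N -> periodic (class_count r) a2.
Proof.
move=> lt_r3; have m_gt0 : (0 < m)%N by case: m odd_m.
have coprime_slopes : [/\ coprimez (slope r 1 2) m, coprimez (slope r 1 1) m
                       & coprimez (sA2 r) m].
  by split; apply: coprimez_odd => //; case: r lt_r3 => [|[|[|]]].
case: coprime_slopes => cop_head cop_tail cop_class.
have head_a2 := periodic_coprime (head_count_periodic_m r)
                  (head_count_periodic r) cop_head.
have tail_a2 := periodic_coprime (tail_count_periodic_m r)
                  (tail_count_periodic r) cop_tail.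
have head_tail : head_count r =1 tail_count r.
  apply: (periodic_telescope m_gt0 (class_count_periodic_m r)
            (periodicMz (sA2 r) head_a2) (periodicMz (sA2 r) tail_a2)).
  exact: class_count_shift.
apply: (periodic_coprime (class_count_periodic_m r) _ cop_class) => K.
have := class_count_shift r (K + a2 * sA2 r); rewrite addrK head_tail.
by move/eqP; rewrite eqn_add2r => /eqP <-.
Qed.

Section Gcd3.

Hypothesis gcd_a2m : gcdz a2 m%:Z = 3.

Lemma dvd3_m : (3 %| m)%N.
Proof. by move: (dvdz_gcdr a2 m%:Z); rewrite gcd_a2m dvdzE. Qed.

Lemma dvd3_a2 : (3 %| a2)%Z.
Proof. by rewrite -gcd_a2m dvdz_gcdl. Qed.

Lemma class_count_mod3 r K : (r < 3)%N ->
  class_count r K = ((3 %| (a1 * cA1 r - K)%R)%Z * class_count r (a1 * cA1 r))%N.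
Proof.
move=> lt_r3; have [on_K|off_K] := boolP (3 %| a1 * cA1 r - K)%Z.
  rewrite mul1n; apply: (periodic_dvdz (d := 3)); last by rewrite -opprB rpredN.
  by rewrite -gcd_a2m; apply: periodic_gcdz;
    [exact: class_count_periodic | exact: class_count_periodic_m].
by rewrite class_count_off ?dvd3_m ?dvd3_a2.
Qed.

Lemma class_size_mod3 r : (r < 3)%N ->
  class_size n r = (m %/ 3 * class_count r (a1 * cA1 r))%N.
Proof.
move=> lt_r3; have m_gt0 : (0 < m)%N by case: m odd_m.
rewrite -sum_class_count //.
rewrite (eq_bigr _ (fun (K : 'I_m) _ => class_count_mod3 K%:Z lt_r3)) -big_distrl /=.
congr (_ * _)%N.
have := @sum_nat_periodic (fun K => (3 %| (a1 * cA1 r - K%:Z)%R)%Z) 3 (m %/ 3).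
rewrite mulnC divnK ?dvd3_m // sum_dvdz_residues // muln1; apply=> K.
by rewrite PoszD opprD addrA rpredBr.
Qed.

Lemma class_counts_gcd3 K : gcdz (gcdz a1 a2) m%:Z = 1 ->
  (\sum_(r < 3) class_count r K)%N = class_count 0 a1.
Proof.
move=> gcd_a1a2m.
have not_dvd3_a1 : ~~ (3 %| a1)%Z.
  apply: contra_eqN gcd_a1a2m => dvd3_a1.
  suff : (3 %| gcdz (gcdz a1 a2) m%:Z)%Z by apply: contraTneq => ->.
  by rewrite !dvdz_gcd dvd3_a1 dvd3_a2 dvdzE dvd3_m.
have class_eq r : (r < 3)%N ->
    class_count r (a1 * cA1 r) = class_count 0 (a1 * cA1 0).
  have m_gt0 : (0 < m)%N by case: m odd_m.
  have m3_gt0 : (0 < m %/ 3)%N by rewrite divn_gt0 // dvdn_leq ?dvd3_m.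
  have dvd3_n : (3 %| n)%N by apply: dvdn_trans n_mult; apply: dvdn_mulr.
  case: r => [|[|[|]]] // _; apply/eqP;
    rewrite -(eqn_pmul2l m3_gt0) -!class_size_mod3 // (@class_size_succ n 0) //.
  by rewrite (@class_size_succ n 1).
rewrite !big_ord_recr big_ord0 /= !(@class_count_mod3 _ K) //.
rewrite (class_eq 1%N) // (class_eq 2%N) // -!mulnDl.
rewrite (_ : _ + _ = 1)%N ?mul1n; last by rewrite /cA1 /=; lia.
by rewrite /cA1 /= mulr1.
Qed.

End Gcd3.

End MultipleOf3m.

End Triangle.

Theorem theorem16 (a1 a2 : int) (m : nat) :
  odd m ->
  gcdz (gcdz a1 a2) m%:Z = 1 ->
  (gcdz a2 m%:Z = 1 \/ gcdz a2 m%:Z = 3) ->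
  forall lambda : nat,
    balanced m (IAP (Avec a1 a2) (rowX24 (Avec a1 a2))) (3 * lambda * m)%N.
Proof.
move=> odd_m gcd_a1a2m gcd_a2m lambda k1 k2 _ _.
set n := (3 * lambda * m)%N.
have n_mult : (3 * m %| n)%N by rewrite /n mulnAC dvdn_mulr.
rewrite !tri_count_classes.
case: gcd_a2m => [gcd1|gcd3]; first last.
  by rewrite !class_counts_gcd3.
apply: eq_bigr => r _.
have class_count_1 : periodic (class_count a1 a2 m n r) 1.
  rewrite -gcd1; apply: periodic_gcdz;
    [exact: class_count_periodic | exact: class_count_periodic_m].
exact: periodic_dvdz class_count_1 (dvd1z _).
Qed.
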